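(* Let $-\pi\le\mu_1,\mu_2<\pi$ and $0\le\rho_1,\rho_2<1$, and consider the probability density on $[-\pi,\pi)$ $$f(\theta)=C\left[\{1+\rho_1^2-2\rho_1\cos(\theta-\mu_1)\}\{1+\rho_2^2-2\rho_2\cos(\theta-\mu_2)\}\right]^{-1},$$ with $C>0$ the normalizing constant. Then $f$ is symmetric (about some point of the circle) if and only if $\rho_1=\rho_2$, or $\rho_j=0$ for some $j\in\{1,2\}$, or $\mu_1=\mu_2+(j-1)\pi$ for some $j\in\{1,2\}$ (angles taken modulo $2\pi$). *)

From Stdlib Require Import Reals Lra.
From Coquelicot Require Import Coquelicot.
Open Scope R_scope.

Definition wc_kernel (m1 m2 r1 r2 : R) (t : R) : R :=
  / ((1 + r1 ^ 2 - 2 * r1 * cos (t - m1)) * (1 + r2 ^ 2 - 2 * r2 * cos (t - m2))).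

(* The density f(theta) = C * kernel(theta), viewed as a 2*pi-periodic
   function on R (i.e. a function on the circle). *)
Definition wc_density (C m1 m2 r1 r2 : R) (t : R) : R :=
  C * wc_kernel m1 m2 r1 r2 t.

Definition circ_symmetric (f : R -> R) : Prop :=
  exists phi : R, forall t : R, f (phi + t) = f (phi - t).

Definition eq_mod_2pi (a b : R) : Prop :=
  exists k : Z, a = b + 2 * IZR k * PI.

(* Write [P] for the product of the two denominator factors, so that the density is [C / P].
   Expanding [cos (phi +- t - m_j)] gives
     [P (phi + t) - P (phi - t) = 4 sin t (a - b cos t)]
   where [a] and [b] depend only on [phi]; hence [f] is symmetric about [phi] iff [a = b = 0].
   With [x_j = phi - m_j], [b = 0] means [sin (x1 + x2) = 0] (when [r1 r2 <> 0]), which forces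
   [sin x1 = +- sin x2]; the sign [+] makes [a] a nonzero multiple of [sin x1] unless
   [sin x1 = sin x2 = 0], i.e. [m1 - m2] is a multiple of [pi], and the sign [-] makes [a]
   a multiple of [(r1 - r2)(1 - r1 r2)]. Conversely each listed case has an explicit
   centre of symmetry. *)
From Stdlib Require Import Reals Lra ZArith.
From Coquelicot Require Import Coquelicot.
Open Scope R_scope.

Lemma sin_eq_or_opp_of_sin_add_eq0 (x y : R) :
  sin (x + y) = 0 -> sin x = sin y \/ sin x = - sin y.
Proof.
  rewrite sin_plus. intros hxy.
  pose proof (sin2_cos2 x) as hx. pose proof (sin2_cos2 y) as hy.
  apply Rsqr_eq. unfold Rsqr in *.
  assert (e : (sin x * cos y) * (sin x * cos y) = (cos x * sin y) * (cos x * sin y)).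
  { replace (sin x * cos y) with (- (cos x * sin y)) by lra. ring. }
  nra.
Qed.

Lemma odd_trig_poly_eq0 (a b : R) :
  (forall t, sin t * (a - b * cos t) = 0) -> a = 0 /\ b = 0.
Proof.
  intros h.
  assert (ha : a = 0).
  { pose proof (h (PI / 2)) as h2. rewrite sin_PI2, cos_PI2 in h2. lra. }
  split; [exact ha|].
  pose proof (h (PI / 4)) as h4. rewrite <- sin_cos_PI4, ha in h4.
  assert (0 < sin (PI / 4)) by (apply sin_gt_0; pose proof PI_RGT_0; lra).
  assert (e : b * (sin (PI / 4) * sin (PI / 4)) = 0) by lra.
  apply Rmult_integral in e. destruct e; nra.
Qed.

Lemma multiple_of_PI_mod_2PI (x y : R) :
  (exists k : Z, x = y + IZR k * PI) <-> eq_mod_2pi x y \/ eq_mod_2pi x (y + PI).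
Proof.
  split.
  - intros [k e]. destruct (Z.Even_or_Odd k) as [[q ->] | [q ->]].
    + left. exists q. rewrite e, mult_IZR. ring.
    + right. exists q. rewrite e, plus_IZR, mult_IZR. ring.
  - intros [[q e] | [q e]].
    + exists (2 * q)%Z. rewrite e, mult_IZR. ring.
    + exists (2 * q + 1)%Z. rewrite e, plus_IZR, mult_IZR. ring.
Qed.

Section ReflectionSymmetry.

Variables m1 m2 r1 r2 : R.

Definition wc_denom (t : R) : R :=
  (1 + r1 ^ 2 - 2 * r1 * cos (t - m1)) * (1 + r2 ^ 2 - 2 * r2 * cos (t - m2)).

Definition sym_coef_sin (phi : R) : R :=
  (1 + r1 ^ 2) * r2 * sin (phi - m2) + (1 + r2 ^ 2) * r1 * sin (phi - m1).

Definition sym_coef_cos (phi : R) : R := 2 * r1 * r2 * sin (2 * phi - m1 - m2).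

Lemma wc_denom_reflect_diff (phi t : R) :
  wc_denom (phi + t) - wc_denom (phi - t) =
  4 * sin t * (sym_coef_sin phi - sym_coef_cos phi * cos t).
Proof.
  unfold wc_denom, sym_coef_sin, sym_coef_cos.
  replace (phi + t - m1) with (phi - m1 + t) by ring.
  replace (phi + t - m2) with (phi - m2 + t) by ring.
  replace (phi - t - m1) with (phi - m1 - t) by ring.
  replace (phi - t - m2) with (phi - m2 - t) by ring.
  replace (2 * phi - m1 - m2) with (phi - m1 + (phi - m2)) by ring.
  rewrite (cos_plus (phi - m1)), (cos_plus (phi - m2)), (cos_minus (phi - m1)),
    (cos_minus (phi - m2)), sin_plus.
  ring.
Qed.

Lemma wc_denom_symmetric_iff (phi : R) :
  (forall t, wc_denom (phi + t) = wc_denom (phi - t)) <->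
  sym_coef_sin phi = 0 /\ sym_coef_cos phi = 0.
Proof.
  split.
  - intros h. apply odd_trig_poly_eq0. intros t.
    assert (e := wc_denom_reflect_diff phi t). rewrite (h t) in e. lra.
  - intros [ha hb] t. assert (e := wc_denom_reflect_diff phi t).
    rewrite ha, hb in e. lra.
Qed.

Lemma wc_density_symmetric_iff (C phi : R) : C <> 0 ->
  (forall t, wc_density C m1 m2 r1 r2 (phi + t) = wc_density C m1 m2 r1 r2 (phi - t)) <->
  (forall t, wc_denom (phi + t) = wc_denom (phi - t)).
Proof.
  intros hC. unfold wc_density, wc_kernel. split; intros h t.
  (* [Rinv] is injective on all of [R], so the factors need not be nonzero. *)
  - apply Rinv_eq_reg, (Rmult_eq_reg_l C); [apply h | exact hC].
  - change (C * / wc_denom (phi + t) = C * / wc_denom (phi - t)). now rewrite h.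
Qed.

Lemma sym_coefs_eq0_cases (phi : R) : 0 < r1 < 1 -> 0 < r2 < 1 ->
  sym_coef_sin phi = 0 -> sym_coef_cos phi = 0 ->
  r1 = r2 \/ exists k : Z, m1 = m2 + IZR k * PI.
Proof.
  unfold sym_coef_sin, sym_coef_cos. intros hr1 hr2 ha hb.
  assert (hsum : sin (phi - m1 + (phi - m2)) = 0).
  { replace (phi - m1 + (phi - m2)) with (2 * phi - m1 - m2) by ring.
    assert (0 < 2 * r1 * r2) by nra. nra. }
  destruct (sin_eq_or_opp_of_sin_add_eq0 _ _ hsum) as [e | e];
    destruct (Req_dec (sin (phi - m1)) 0) as [z1 | nz1].
  1, 3:
    right; destruct (sin_eq_0_0 _ z1) as [k e1];
    destruct (sin_eq_0_0 (phi - m2)) as [l e2]; [lra|];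
    exists (l - k)%Z; rewrite minus_IZR; lra.
  - left. exfalso. rewrite <- e in ha.
    assert (0 < (1 + r1 ^ 2) * r2 + (1 + r2 ^ 2) * r1) by nra.
    apply nz1, (Rmult_eq_reg_l ((1 + r1 ^ 2) * r2 + (1 + r2 ^ 2) * r1)); lra.
  - left. replace (sin (phi - m2)) with (- sin (phi - m1)) in ha by lra.
    assert (e' : (r1 - r2) * ((1 - r1 * r2) * sin (phi - m1)) = 0) by lra.
    apply Rmult_integral in e'. destruct e' as [? | e']; [lra|].
    apply Rmult_integral in e'. destruct e'; [nra | contradiction].
Qed.

Lemma sym_coefs_eq0_center :
  r1 = r2 \/ r1 = 0 \/ r2 = 0 \/ (exists k : Z, m1 = m2 + IZR k * PI) ->
  exists phi, sym_coef_sin phi = 0 /\ sym_coef_cos phi = 0.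
Proof.
  unfold sym_coef_sin, sym_coef_cos.
  intros [e | [e | [e | [k e]]]].
  - subst r2. exists ((m1 + m2) / 2).
    replace ((m1 + m2) / 2 - m1) with (- ((m1 - m2) / 2)) by field.
    replace ((m1 + m2) / 2 - m2) with ((m1 - m2) / 2) by field.
    replace (2 * ((m1 + m2) / 2) - m1 - m2) with 0 by field.
    rewrite sin_neg, sin_0. split; ring.
  - subst r1. exists m2. rewrite Rminus_diag, sin_0. split; ring.
  - subst r2. exists m1. rewrite Rminus_diag, sin_0. split; ring.
  - exists m1. rewrite Rminus_diag, sin_0.
    replace (2 * m1 - m1 - m2) with (m1 - m2) by ring.
    rewrite (sin_eq_0_1 (m1 - m2)) by (exists k; lra). split; ring.
Qed.

End ReflectionSymmetry.

Theorem theorem3 (m1 m2 r1 r2 C : R)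
  (hm1 : - PI <= m1 < PI) (hm2 : - PI <= m2 < PI)
  (hr1 : 0 <= r1 < 1) (hr2 : 0 <= r2 < 1)
  (hC : 0 < C)
  (hnorm : is_RInt (wc_density C m1 m2 r1 r2) (- PI) PI 1) :
  circ_symmetric (wc_density C m1 m2 r1 r2) <->
  (r1 = r2 \/ r1 = 0 \/ r2 = 0 \/
   eq_mod_2pi m1 m2 \/ eq_mod_2pi m1 (m2 + PI)).
Proof.
  assert (hC0 : C <> 0) by lra.
  rewrite <- multiple_of_PI_mod_2PI. unfold circ_symmetric. split.
  - intros [phi h].
    rewrite (wc_density_symmetric_iff m1 m2 r1 r2 C phi hC0), wc_denom_symmetric_iff in h.
    destruct h as [ha hb].
    destruct (Req_dec r1 0) as [e1 | n1]; [tauto|].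
    destruct (Req_dec r2 0) as [e2 | n2]; [tauto|].
    destruct (sym_coefs_eq0_cases m1 m2 r1 r2 phi) as [? | ?]; auto; lra.
  - intros h. destruct (sym_coefs_eq0_center m1 m2 r1 r2 h) as [phi hphi].
    exists phi.
    now rewrite (wc_density_symmetric_iff m1 m2 r1 r2 C phi hC0), wc_denom_symmetric_iff.
Qed.
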